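(* Let $D$ be an $n\times n$ distance matrix and let $q_0$ be the smallest $q\in\mathbb N$ such that $D^{(q)}=D$. Then there exists a graph realisation $(G=(V,E),\Phi)$ of $D$ with $$|V|\le n+\sum_{\substack{1\le i<j\le n\\ 2\le D_{ij}\le q_0}}(D_{ij}-1).$$
   Context: $[n]=\{1,\dots,n\}$. An $n\times n$ matrix $D$ with non-negative integer entries is a distance matrix if (i) $D_{ii}=0$ for all $i$ and $D_{ij}>0$ for all $i\ne j$; (ii) $D$ is symmetric; (iii) $D_{iw}+D_{wj}\ge D_{ij}$ for all $i,j,w\in[n]$. For $q\in\mathbb N$, the $q$-skeleton $G^q$ of $D$ is the edge-weighted graph with vertex set $[n]$ having an edge $\{i,j\}$ ($i<j$) if and only if $D_{ij}\le q$, this edge having weight (length) $D_{ij}$. $D^{(q)}$ denotes the $n\times n$ matrix whose $(i,j)$ entry is the weighted shortest-path distance between $i$ and $j$ in $G^q$ (equal to $\infty$ if no path exists). A graph realisation of $D$ is a pair $(G,\Phi)$, where $G=(V,E)$ is a finite simple undirected unweighted graph and $\Phi:[n]\to V$ is an injective map such that $d_G(\Phi(i),\Phi(j))=D_{ij}$ for all $i,j\in[n]$; here $d_G$ denotes the shortest-path distance in $G$ (equal to $\infty$ if no path exists). *)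

From mathcomp Require Import all_boot all_algebra.
Set Implicit Arguments. Unset Strict Implicit. Unset Printing Implicit Defensive.

Definition distance_matrix (n : nat) (D : 'M[nat]_n) : Prop :=
  [/\ (forall i, D i i = 0%N),
      (forall i j, i != j -> 0 < D i j),
      (forall i j, D i j = D j i) &
      (forall i j w, D i j <= D i w + D w j)].

Definition skel_edge (n : nat) (D : 'M[nat]_n) (q : nat) : rel 'I_n :=
  fun a b => (a != b) && (D a b <= q).

Definition walk_weight (n : nat) (D : 'M[nat]_n) (i : 'I_n) (p : seq 'I_n) : nat :=
  sumn (pairmap (fun a b => D a b) i p).

Definition skel_walk (n : nat) (D : 'M[nat]_n) (q : nat) (i j : 'I_n)
  (p : seq 'I_n) : Prop :=
  path (skel_edge D q) i p /\ last i p = j.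

(* "D^(q)_{ij} = d" for a finite value d: d is the weighted shortest-path
   distance from i to j in G^q (a walk of weight d exists, none is shorter). *)
Definition skel_dist_is (n : nat) (D : 'M[nat]_n) (q : nat) (i j : 'I_n)
  (d : nat) : Prop :=
  (exists p, skel_walk D q i j p /\ walk_weight D i p = d) /\
  (forall p, skel_walk D q i j p -> d <= walk_weight D i p).

(* D^(q) = D (entrywise; D has finite entries so infinite entries are excluded) *)
Definition skel_eq (n : nat) (D : 'M[nat]_n) (q : nat) : Prop :=
  forall i j, skel_dist_is D q i j (D i j).

Definition gdist_is (V : finType) (e : rel V) (x y : V) (k : nat) : Prop :=
  (exists p, [/\ path e x p, last x p = y & size p = k]) /\
  (forall p, path e x p -> last x p = y -> k <= size p).

Definition graph_realisation (n : nat) (D : 'M[nat]_n) (V : finType)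
  (e : rel V) (Phi : 'I_n -> V) : Prop :=
  [/\ symmetric e, irreflexive e, injective Phi &
      forall i j, gdist_is e (Phi i) (Phi j) (D i j)].

From mathcomp Require Import all_boot all_algebra zify.
Set Implicit Arguments. Unset Strict Implicit.

(* Subdivide every edge {i, j} of the skeleton G^q0 with 2 <= D i j by a path
   of D i j - 1 new vertices, and keep the edges of weight 1.  A shortest walk
   in G^q0, of weight D i j since D^(q0) = D, becomes a path of the same length
   between Phi i and Phi j.  Conversely, the triangle inequality makes the
   estimate h_a (v) of the distance from Phi a to v, read off through the two
   ends of the subdivided edge containing v, grow by at most 1 along each edge;
   since h_a (Phi b) = D a b, no path from Phi a to Phi b is shorter. *)

Section Walks.
Variables (T : Type) (e : rel T).

Definition reach (x y : T) (m : nat) : Prop :=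
  exists p, [/\ path e x p, last x p = y & size p = m].

Lemma reach0 x : reach x x 0.
Proof. by exists [::]. Qed.

Lemma reach1 x y : e x y -> reach x y 1.
Proof. by move=> exy; exists [:: y]; rewrite /= exy. Qed.

Lemma reach_cat x y z m m' : reach x y m -> reach y z m' -> reach x z (m + m').
Proof.
move=> [p [px py <-]] [p' [p'y p'z <-]]; exists (p ++ p').
by rewrite cat_path last_cat py px p'y p'z size_cat.
Qed.

Lemma reach_sym x y m : symmetric e -> reach x y m -> reach y x m.
Proof.
move=> e_sym [p [px <- <-]] {y m}; elim: p x px => [|z p IHp] x /=.
  by move=> _; apply: reach0.
case/andP=> exz pz; rewrite -addn1; apply: reach_cat (IHp z pz) _.
by apply: reach1; rewrite e_sym.
Qed.

Lemma path_lipschitz (f : T -> nat) x p :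
  (forall u v, e u v -> f v <= (f u).+1) ->
  path e x p -> f (last x p) <= f x + size p.
Proof.
move=> f_lip; elim: p x => [|y p IHp] x /=; first by rewrite addn0.
case/andP=> exy py; apply: leq_trans (IHp y py) _.
by rewrite addnS -addSn leq_add2r f_lip.
Qed.

End Walks.

Section Subdivision.
Variables (n : nat) (D : 'M[nat]_n) (q : nat).

Definition subdivided (ij : 'I_n * 'I_n) : bool :=
  (ij.1 < ij.2) && (2 <= D ij.1 ij.2 <= q).

Definition inner_count (ij : 'I_n * 'I_n) : nat :=
  if subdivided ij then D ij.1 ij.2 - 1 else 0.

Definition inner_vertex := {ij : 'I_n * 'I_n & 'I_(inner_count ij)}.

Definition subdivision : finType := ('I_n + inner_vertex)%type.

Definition src (s : inner_vertex) : 'I_n := (tag s).1.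
Definition dst (s : inner_vertex) : 'I_n := (tag s).2.
Definition offset (s : inner_vertex) : nat := (tagged s).+1.

Lemma inner_vertexP s : subdivided (tag s) /\ offset s < D (src s) (dst s).
Proof.
have : (tagged s : nat) < inner_count (tag s) := ltn_ord _.
rewrite /offset /src /dst /inner_count.
move: (nat_of_ord (tagged s)) => k; move: (tag s) => ij; case: ifP => // sub_s lt_s; split=> //.
by move: sub_s => /andP[_ /andP[two_le _]]; lia.
Qed.

Definition end_edge (a : 'I_n) (s : inner_vertex) : bool :=
  ((a == src s) && (offset s == 1)) ||
  ((a == dst s) && ((offset s).+1 == D (src s) (dst s))).

Definition subdivision_edge (u v : subdivision) : bool :=
  match u, v with
  | inl a, inl b => (a != b) && (D a b == 1)
  | inl a, inr s | inr s, inl a => end_edge a s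
  | inr s, inr t => [&& src s == src t, dst s == dst t &
                       ((offset s).+1 == offset t) || ((offset t).+1 == offset s)]
  end.

Lemma subdivision_edge_irr : irreflexive subdivision_edge.
Proof. by case=> [a|s] /=; rewrite !eqxx //= orbb; apply/negbTE/eqP; lia. Qed.

Definition dist_estimate (a : 'I_n) (v : subdivision) : nat :=
  match v with
  | inl b => D a b
  | inr s => minn (D a (src s) + offset s)
                  (D a (dst s) + (D (src s) (dst s) - offset s))
  end.

(* The k-th vertex of the path subdividing {i, j}; the final [inl i] is a
   junk value, never reached for 0 < k < D i j when (i, j) is subdivided. *)
Definition chain (i j : 'I_n) (k : nat) : subdivision :=
  if k == 0 then inl i else if k == D i j then inl j else
  if insub k.-1 : option 'I_(inner_count (i, j)) is Some o
  then inr (Tagged (fun ij => 'I_(inner_count ij)) o)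
  else inl i.

Lemma chain_inner i j k : subdivided (i, j) -> 0 < k < D i j ->
  exists s, [/\ chain i j k = inr s, src s = i, dst s = j & offset s = k].
Proof.
move=> sub_ij k_bnd; rewrite /chain.
have /negbTE -> : k != 0 by lia.
have /negbTE -> : k != D i j by lia.
case: insubP => [o _ o_k | ].
  by eexists; split=> //; rewrite /offset /= o_k; lia.
by rewrite /inner_count sub_ij /= => /negP[]; lia.
Qed.

Lemma chain_end i j : subdivided (i, j) -> chain i j (D i j) = inl j.
Proof.
case/andP=> _ /= /andP[two_le _]; rewrite /chain eqxx.
by have /negbTE -> : D i j != 0 by lia.
Qed.

Lemma chain_step i j k : subdivided (i, j) -> k < D i j ->
  subdivision_edge (chain i j k) (chain i j k.+1).
Proof.
move=> sub_ij lt_k; have /andP[_ /= /andP[two_le _]] := sub_ij.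
case: k lt_k => [|k] lt_k.
  have [s [-> si _ sk]] := chain_inner (k := 1) sub_ij ltac:(lia).
  by rewrite /chain eqxx /= /end_edge si sk !eqxx.
have [s [-> si sj sk]] := chain_inner (k := k.+1) sub_ij ltac:(lia).
case: (ltnP k.+2 (D i j)) => [lt_k2 | ge_k2].
  have [t [-> ti tj tk]] := chain_inner (k := k.+2) sub_ij lt_k2.
  by rewrite /= si sj ti tj sk tk !eqxx.
have -> : k.+2 = D i j by lia.
by rewrite chain_end //= /end_edge si sj sk eqxx orbC /=; apply/eqP; lia.
Qed.

Lemma reach_chain i j k m : subdivided (i, j) -> k + m <= D i j ->
  reach subdivision_edge (chain i j k) (chain i j (k + m)) m.
Proof.
move=> sub_ij; elim: m k => [|m IHm] k le_km; first by rewrite addn0; apply: reach0.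
rewrite -addSnnS -[m.+1]add1n.
apply: reach_cat (reach1 (chain_step sub_ij _)) (IHm _ _); lia.
Qed.

Lemma reach_subdivided i j : subdivided (i, j) ->
  reach subdivision_edge (inl i) (inl j) (D i j).
Proof.
move=> sub_ij; have := reach_chain (k := 0) (m := D i j) sub_ij (leqnn _).
by rewrite add0n chain_end // /chain eqxx.
Qed.

Hypothesis D_dist : distance_matrix D.

Lemma subdivision_edge_sym : symmetric subdivision_edge.
Proof.
have [_ _ D_sym _] := D_dist.
case=> [a|s] [b|t] //=; first by rewrite eq_sym D_sym.
by rewrite (eq_sym (src s)) (eq_sym (dst s)) orbC.
Qed.

Lemma dist_estimate_lipschitz a u v :
  subdivision_edge u v -> dist_estimate a v <= (dist_estimate a u).+1.
Proof.
have [_ _ D_sym D_tri] := D_dist.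
case: u => [b|s]; case: v => [c|t] /=.
- by case/andP=> _ /eqP Dbc; have := D_tri a c b; lia.
- by have [_ lt_t] := inner_vertexP t; case/orP=> /andP[/eqP-> /eqP]; lia.
- have [_ lt_s] := inner_vertexP s; case/orP=> /andP[/eqP-> /eqP os].
    by have := D_tri a (src s) (dst s); rewrite (D_sym (dst s)); lia.
  by have := D_tri a (dst s) (src s); lia.
- have [_ lt_s] := inner_vertexP s; have [_ lt_t] := inner_vertexP t.
  case/and3P=> /eqP st1 /eqP st2; rewrite -st1 -st2 in lt_t *.
  by case/orP=> /eqP; lia.
Qed.

Lemma reach_skel_edge u v : skel_edge D q u v ->
  reach subdivision_edge (inl u) (inl v) (D u v).
Proof.
have [_ D_pos D_sym _] := D_dist.
case/andP=> neq_uv le_q; have := D_pos _ _ neq_uv => pos_uv.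
case: (ltnP 1 (D u v)) => [two_le | le_one].
  case: (ltngtP u v) => [lt_uv | gt_uv | /val_inj eq_uv].
  - by apply: reach_subdivided; rewrite /subdivided /= lt_uv two_le.
  - rewrite D_sym; apply: reach_sym subdivision_edge_sym _.
    by apply: reach_subdivided; rewrite /subdivided /= gt_uv -D_sym two_le.
  - by rewrite eq_uv eqxx in neq_uv.
have Duv : D u v = 1 by lia.
by rewrite Duv; apply: reach1; rewrite /= neq_uv Duv.
Qed.

Lemma reach_skel_walk i p : path (skel_edge D q) i p ->
  reach subdivision_edge (inl i) (inl (last i p)) (walk_weight D i p).
Proof.
elim: p i => [|a p IHp] i /=; first by move=> _; apply: reach0.
by case/andP=> e_ia pa; apply: reach_cat (reach_skel_edge e_ia) (IHp a pa).
Qed.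

End Subdivision.

Lemma card_subdivision n (D : 'M[nat]_n) q :
  #|subdivision D q| =
  n + \sum_(i < n) \sum_(j < n | (i < j) && (2 <= D i j <= q)) (D i j - 1).
Proof.
rewrite card_sum card_ord card_tagged sumnE big_map big_enum /=.
rewrite -(pair_big xpredT xpredT (fun i j => #|'I_(inner_count D q (i, j))|)) /=.
congr (_ + _); apply: eq_bigr => i _; rewrite [RHS]big_mkcond.
by apply: eq_bigr => j _; rewrite card_ord /inner_count /subdivided.
Qed.

Theorem mainTheorem8 (n : nat) (D : 'M[nat]_n) (q0 : nat) :
  distance_matrix D ->
  skel_eq D q0 ->
  (forall q, skel_eq D q -> q0 <= q) ->
  exists (V : finType) (e : rel V) (Phi : 'I_n -> V),
    graph_realisation D e Phi /\
    #|V| <= n + \sum_(i < n) \sum_(j < n | (i < j) && (2 <= D i j <= q0))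
                  (D i j - 1).
Proof.
move=> D_dist D_skel _.
exists (subdivision D q0), (@subdivision_edge n D q0), inl.
split; last by rewrite card_subdivision.
split; [exact: subdivision_edge_sym | exact: subdivision_edge_irr
       | by move=> a b [] | move=> i j; split].
- have [[p [[p_path p_last] p_weight]] _] := D_skel i j.
  by have := reach_skel_walk D_dist p_path; rewrite p_last p_weight.
- move=> p p_path p_last; have [D_refl _ _ _] := D_dist.
  have := path_lipschitz (dist_estimate_lipschitz D_dist i) p_path.
  by rewrite p_last /= D_refl.
Qed.
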